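(* Let $\beta\in(0,\infty)$ and, for each $N\ge 1$, let $K=K_N$ be a positive integer with $K_N/N\to\beta$ as $N\to\infty$. Let $\boldsymbol{S}\in\mathbb{R}^{N\times K}$ be a random time-hopping matrix with $N_{\mathsf s}=1$, i.e. its columns $\boldsymbol{s}_1,\dots,\boldsymbol{s}_K$ are independent, and $\boldsymbol{s}_k=\epsilon_k\boldsymbol{e}_{\pi_k}$ where $\pi_k$ is uniform on $\{1,\dots,N\}$, $\epsilon_k$ is uniform on $\{-1,+1\}$, and all $\pi_k,\epsilon_k$ are independent. For an integer $L\ge 1$ let \[ m_L:=\frac{1}{N}\operatorname{Tr}\big(\boldsymbol{S}\boldsymbol{S}^{\mathsf T}\big)^L. \] Then, as $N\to\infty$, $m_L$ converges in probability to \[ \bar m_L:=\sum_{\ell=1}^{L}\left\{ {L \atop \ell}\right\}\beta^{\ell}, \] the $L$th moment of a Poisson distribution with mean $\beta$, where $\left\{ {L \atop \ell}\right\}$ denotes the Stirling number of the second kind.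
   Context: $\boldsymbol{e}_i$ denotes the $i$th standard basis vector of $\mathbb{R}^N$. The limit regime $N\to\infty$, $K\to\infty$, $K/N\to\beta$ is called the large-system limit. *)

From HB Require Import structures.
From mathcomp Require Import all_boot all_order all_algebra.
From mathcomp Require Import reals.
Set Implicit Arguments. Unset Strict Implicit. Unset Printing Implicit Defensive.
Import Order.TTheory GRing.Theory Num.Theory.
Local Open Scope ring_scope.

Fixpoint stirling2 (n k : nat) : nat :=
  match n with
  | 0 => (k == 0)%N
  | n'.+1 => match k with
             | 0 => 0
             | k'.+1 => (k * stirling2 n' k + stirling2 n' k')%N
             end
  end.

(* Sample space for N = n.+1 rows and k columns: for each column j,
   the pair (pi_j, eps_j) with pi_j in {1..N} (as 'I_N) and
   eps_j in bool (true = +1, false = -1). Uniform measure on it makes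
   all pi_j, eps_j independent and uniform. *)
Definition Omega (n k : nat) := {ffun 'I_k -> 'I_n.+1 * bool}.

Definition unif_prob (R : realType) (T : finType) (P : pred T) : R :=
  (#|[pred w | P w]|)%:R / (#|{: T}|)%:R.

Definition thmx (R : realType) (n k : nat) (w : Omega n k) : 'M[R]_(n.+1, k) :=
  \matrix_(i, j) (if i == (w j).1 then (if (w j).2 then 1 else -1) else 0).

Definition moment (R : realType) (n k : nat) (w : Omega n k) (L : nat) : R :=
  (n.+1%:R)^-1 * \tr ((thmx R w *m (thmx R w)^T) ^+ L).

Definition mbar (R : realType) (beta : R) (L : nat) : R :=
  \sum_(1 <= l < L.+1) (stirling2 L l)%:R * beta ^+ l.

From HB Require Import structures.
From mathcomp Require Import all_boot all_order all_algebra.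
From mathcomp Require Import ring.
From mathcomp Require Import all_classical all_reals all_analysis.
Import Order.TTheory GRing.Theory Num.Theory.
Import numFieldNormedType.Exports.
Local Open Scope ring_scope.

(* The columns of S are signed standard basis vectors, so S S^T is diagonal and
   its entries are the row loads X_i = #{k | pi_k = i}; hence
   m_L = N^-1 sum_i X_i^L.  Expanding X^L = sum_r S(L,r) X^(r) in falling
   factorials and using E X_i^(r) = K^(r) / N^r shows that E m_L tends to
   sum_r S(L,r) beta^r.  Loads of distinct rows are negatively correlated,
   E[X_i^L X_j^L] <= (E X_i^L)^2, so Var m_L <= E X_1^(2L) / N -> 0, and
   Chebyshev's inequality concludes. *)

Section UniformMean.
Context {R : realType} {T : finType}.

Definition unif_mean (f : T -> R) : R := (\sum_x f x) / #|T|%:R.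

Lemma unif_mean_sum (I : finType) (F : I -> T -> R) :
  unif_mean (fun x => \sum_i F i x) = \sum_i unif_mean (F i).
Proof. by rewrite /unif_mean exchange_big mulr_suml. Qed.

Lemma unif_meanD (f g : T -> R) :
  unif_mean (fun x => f x + g x) = unif_mean f + unif_mean g.
Proof. by rewrite /unif_mean big_split mulrDl. Qed.

Lemma unif_mean_cst (c : R) : (0 < #|T|)%N -> unif_mean (fun=> c) = c.
Proof.
by move=> T_gt0; rewrite /unif_mean sumr_const -[c *+ _]mulr_natr mulfK ?pnatr_eq0 -?lt0n.
Qed.

Lemma unif_meanZ (c : R) (f : T -> R) :
  unif_mean (fun x => c * f x) = c * unif_mean f.
Proof. by rewrite /unif_mean -mulr_sumr mulrA. Qed.

Lemma le_unif_mean (f g : T -> R) :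
  (forall x, f x <= g x) -> unif_mean f <= unif_mean g.
Proof. by move=> fg; rewrite ler_wpM2r ?invr_ge0 ?ler0n //; apply: ler_sum. Qed.

Lemma unif_mean_indicator (P : pred T) :
  unif_mean (fun x => (P x)%:R) = unif_prob R P.
Proof.
rewrite /unif_mean /unif_prob -[#|_|]sum1_card natr_sum [in RHS]big_mkcond /=.
by congr (_ / _); apply: eq_bigr => x _; rewrite inE; case: (P x).
Qed.

Lemma unif_mean_card (I : finType) (p : I -> pred T) :
  unif_mean (fun x => #|[pred i | p i x]|%:R) = \sum_i unif_prob R (p i).
Proof.
under eq_bigr do rewrite -unif_mean_indicator.
rewrite -unif_mean_sum; congr unif_mean; apply/funext => x.
rewrite -[#|_|]sum1_card natr_sum [in LHS]big_mkcond /=.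
by apply: eq_bigr => i _; rewrite inE; case: (p i x).
Qed.

Lemma chebyshev_unif (f : T -> R) (eps : R) : 0 < eps ->
  unif_prob R (fun x => eps < `|f x|) <= unif_mean (fun x => f x ^+ 2) / eps ^+ 2.
Proof.
move=> eps_gt0; rewrite ler_pdivlMr ?exprn_gt0 // -unif_mean_indicator.
rewrite mulrC -unif_meanZ; apply: le_unif_mean => x.
have [lt_eps_f|_] := ltrP eps `|f x|; last by rewrite mulr0 sqr_ge0.
rewrite mulr1 -(real_normK (num_real (f x))).
by rewrite lerXn2r ?nnegrE ?(ltW eps_gt0) ?(ltW lt_eps_f).
Qed.

End UniformMean.

Section SampleSpace.
Context {n k : nat}.
Local Notation Om := (Omega n k).

Lemma card_Omega : #|{: Om}| = ((n.+1 * 2) ^ k)%N.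
Proof. by rewrite card_ffun card_prod card_bool !card_ord. Qed.

Definition fixes_rows (A : {set 'I_k}) (f : 'I_k -> 'I_n.+1) : pred Om :=
  [pred w : Om | [forall j in A, (w j).1 == f j]].

Lemma card_fixes_rows A f : (#|fixes_rows A f| * n.+1 ^ #|A| = (n.+1 * 2) ^ k)%N.
Proof.
pose F j := if j \in A then [pred p : 'I_n.+1 * bool | p.1 == f j] else predT.
have card_F j : (#|F j| = if j \in A then 2 else n.+1 * 2)%N.
  rewrite /F; case: (j \in A); last by rewrite card_prod card_bool card_ord.
  have -> : #|[pred p : 'I_n.+1 * bool | p.1 == f j]|
           = #|[predX pred1 (f j) & (predT : pred bool)]|.
    by apply: eq_card => -[a b]; rewrite !inE andbT.
  by rewrite cardX card1 [#|_|]card_bool.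
have -> : #|fixes_rows A f| = #|(family F : simpl_pred Om)|.
  apply: eq_card => w; rewrite !inE.
  apply/forall_inP/familyP => [wA j|wF j jA]; rewrite /F.
    by case: ifP => // jA; rewrite inE wA.
  by have := wF j; rewrite /F jA inE.
rewrite card_family foldrE big_map big_enum /= -prod_nat_const.
rewrite [X in (_ * X)%N]big_mkcond -big_split /=.
rewrite -[in RHS](card_ord k) -prod_nat_const; apply: eq_bigr => j _.
by rewrite card_F; case: (j \in A); rewrite ?muln1 // mulnC.
Qed.

Definition in_row (A : {set 'I_k}) (i : 'I_n.+1) : pred Om := fixes_rows A (fun=> i).

Definition row_cols (w : Om) (i : 'I_n.+1) : {set 'I_k} := [set j | (w j).1 == i].

Definition row_load (w : Om) (i : 'I_n.+1) : nat := #|row_cols w i|.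

Definition frange {M} (t : {ffun 'I_M -> 'I_k}) : {set 'I_k} := [set t s | s in 'I_M].

Lemma in_row_frange M (t : {ffun 'I_M -> 'I_k}) w i :
  in_row (frange t) i w = (t \in ffun_on (row_cols w i)).
Proof.
rewrite inE; apply/forall_inP/ffun_onP => [wt s|tw j /imsetP [s _ ->]].
  by rewrite inE wt ?imset_f.
by have := tw s; rewrite inE.
Qed.

Lemma row_load_expE M w i :
  (row_load w i ^ M)%N = #|[pred t : {ffun 'I_M -> 'I_k} | in_row (frange t) i w]|.
Proof.
rewrite -[M in LHS]card_ord -card_ffun_on; apply: eq_card => t.
by rewrite [in RHS]inE in_row_frange.
Qed.

Lemma row_load_ffactE r w i : (row_load w i ^_ r)%N =
  #|[pred t : {ffun 'I_r -> 'I_k} | injectiveb t && in_row (frange t) i w]|.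
Proof.
rewrite -[r in LHS]card_ord -card_inj_ffuns_on; apply: eq_card => t.
by rewrite !inE in_row_frange andbC.
Qed.

Lemma row_load_exp_mulE M w i i' :
  (row_load w i ^ M * row_load w i' ^ M)%N =
  #|[pred tt : {ffun 'I_M -> 'I_k} * {ffun 'I_M -> 'I_k} |
      in_row (frange tt.1) i w && in_row (frange tt.2) i' w]|.
Proof. by rewrite !row_load_expE -cardX; apply: eq_card => -[t t']. Qed.

End SampleSpace.

Lemma stirling2_small M r : (M < r)%N -> stirling2 M r = 0%N.
Proof.
elim: M r => [|M IH] [|r] //= ltMr.
by rewrite (IH r ltMr) (IH r.+1 (ltnW ltMr)) muln0.
Qed.

Lemma mul_ffact x r : (x * x ^_ r = x ^_ r.+1 + r * x ^_ r)%N.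
Proof.
rewrite ffactnSr; have [le_rx | lt_xr] := leqP r x.
  by rewrite -{1}(subnK le_rx) mulnDl mulnC [(r * _)%N]mulnC.
by rewrite ffact_small // !(mul0n, muln0).
Qed.

Lemma expn_stirling2 x M B : (M < B)%N ->
  (x ^ M = \sum_(0 <= r < B) stirling2 M r * x ^_ r)%N.
Proof.
elim: M B => [|M IH] [|B] ltMB //.
  by rewrite big_nat_recl //= big1 ?addn0.
rewrite expnS (IH B.+1 (ltnW ltMB)) big_distrr /= [in RHS]big_nat_recl //= add0n.
rewrite (eq_bigr (fun r => stirling2 M r * x ^_ r.+1 + r * stirling2 M r * x ^_ r)%N);
  last by move=> r _; rewrite mulnCA mul_ffact mulnDr mulnCA mulnA.
rewrite big_split /= big_nat_recr //= (@stirling2_small M B) // mul0n addn0.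
rewrite [X in (_ + X)%N]big_nat_recl // mul0n add0n -big_split /=.
by apply: eq_bigr => r _; rewrite mulnDl addnC mulnA.
Qed.

Lemma expr_diag_mx (R : pzSemiRingType) m (d : 'rV[R]_m.+1) L :
  diag_mx d ^+ L = diag_mx (\row_i (d 0 i ^+ L)).
Proof.
elim: L => [|L IHL]; first by apply/matrixP => i j; rewrite !mxE expr0.
rewrite exprS IHL -mulmxE mulmx_diag; congr diag_mx.
by apply/matrixP => i j; rewrite !mxE exprS.
Qed.

Section LoadMoments.
Variable R : realType.
Context {n k : nat}.
Local Notation Om := (Omega n k).
Local Notation N := (n.+1%:R : R).

Lemma unif_prob_fixes_rows (A : {set 'I_k}) (f : 'I_k -> 'I_n.+1) :
  unif_prob R (fixes_rows A f) = (N ^+ #|A|)^-1.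
Proof.
rewrite /unif_prob; have NA_neq0 : N ^+ #|A| != 0 by rewrite expf_neq0 ?pnatr_eq0.
have -> : #|[pred w | fixes_rows A f w]|%:R = ((n.+1 * 2) ^ k)%N%:R / N ^+ #|A|.
  by rewrite -(card_fixes_rows A f) natrM natrX mulfK.
by rewrite card_Omega mulrC mulKf ?pnatr_eq0 ?expn_eq0.
Qed.

Lemma unif_prob_in_row2 (A B : {set 'I_k}) (i i' : 'I_n.+1) : i != i' ->
  unif_prob R (fun w => in_row A i w && in_row B i' w) <= (N ^+ #|A| * N ^+ #|B|)^-1.
Proof.
(* On disjoint column sets the two constraints combine into one; on overlapping
   sets they are incompatible. *)
move=> neq_ii'; have [disjAB | ] := boolP [disjoint A & B].
  pose g j := if j \in A then i else i'.
  have B_notA j : j \in B -> g j = i'.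
    by move=> jB; rewrite /g (disjointFl disjAB jB).
  have -> : unif_prob R (fun w => in_row A i w && in_row B i' w) =
            unif_prob R (fixes_rows (A :|: B) g).
    rewrite /unif_prob; congr (_%:R / _); apply: eq_card => w; rewrite !inE.
    apply/andP/forall_inP => [[/forall_inP wA /forall_inP wB] j|wAB].
      by case/setUP => [jA | jB]; [rewrite /g jA wA | rewrite B_notA ?wB].
    split; apply/forall_inP => j j_in; have := wAB j; rewrite inE j_in ?orbT.
      by rewrite /g j_in => /(_ isT).
    by rewrite (B_notA _ j_in) => /(_ isT).
  rewrite unif_prob_fixes_rows -exprD.
  by have := (leq_card_setU A B).2; rewrite disjAB => /eqP ->.
rewrite -setI_eq0 => /set0Pn [j /setIP [jA jB]].
have -> : unif_prob R (fun w => in_row A i w && in_row B i' w) = 0.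
  rewrite /unif_prob (_ : #|_| = 0%N) ?mul0r //; apply: eq_card0 => w; rewrite !inE.
  apply/negP => /andP [/forall_inP /(_ j jA) /eqP wi /forall_inP /(_ j jB) /eqP wi'].
  by rewrite -wi -wi' eqxx in neq_ii'.
by rewrite invr_ge0 mulr_ge0 // exprn_ge0.
Qed.

(* The M-th moment of a row load: an M-tuple t of columns lies in row i with
   probability N^-|range t|. *)
Definition load_moment M : R := \sum_(t : {ffun 'I_M -> 'I_k}) (N ^+ #|frange t|)^-1.

Lemma mean_row_load_exp M (i : 'I_n.+1) :
  unif_mean (fun w : Om => (row_load w i ^ M)%:R) = load_moment M.
Proof.
under [X in unif_mean X]eq_fun do rewrite row_load_expE.
rewrite unif_mean_card; apply: eq_bigr => t _; exact: unif_prob_fixes_rows.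
Qed.

Lemma mean_row_load_ffact r (i : 'I_n.+1) :
  unif_mean (fun w : Om => (row_load w i ^_ r)%:R) = (k ^_ r)%:R / N ^+ r.
Proof.
under [X in unif_mean X]eq_fun do rewrite row_load_ffactE.
rewrite unif_mean_card.
transitivity (\sum_(t : {ffun 'I_r -> 'I_k} | injectiveb t) (N ^+ r)^-1).
  rewrite [RHS]big_mkcond; apply: eq_bigr => t _.
  have [/injectiveP inj_t | _] := boolP (injectiveb t).
    by rewrite unif_prob_fixes_rows card_imset // card_ord.
  by rewrite /unif_prob (_ : #|_| = 0%N) ?mul0r //; apply: eq_card0.
rewrite sumr_const (_ : #|_| = k ^_ r)%N; first by rewrite -[X in X = _]mulr_natl.
have := card_inj_ffuns 'I_r 'I_k; rewrite !card_ord => <-.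
by apply: eq_card => t; rewrite inE.
Qed.

Lemma mean_row_load_exp_mul M (i i' : 'I_n.+1) : i != i' ->
  unif_mean (fun w : Om => (row_load w i ^ M * row_load w i' ^ M)%:R)
  <= load_moment M ^+ 2.
Proof.
move=> neq_ii'; under [X in unif_mean X]eq_fun do rewrite row_load_exp_mulE.
rewrite unif_mean_card expr2 big_distrlr pair_big /=.
by apply: ler_sum => -[t t'] _; rewrite -invfM unif_prob_in_row2.
Qed.

Lemma load_moment_stirling M : load_moment M =
  \sum_(r < M.+1) (stirling2 M r)%:R * ((k ^_ r)%:R / N ^+ r).
Proof.
rewrite -(mean_row_load_exp M ord0).
under [X in unif_mean X]eq_fun
  do rewrite (expn_stirling2 _ _ _ (ltnSn M)) big_mkord natr_sum.
rewrite unif_mean_sum; apply: eq_bigr => r _.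
under [X in unif_mean X]eq_fun do rewrite natrM.
by rewrite unif_meanZ mean_row_load_ffact.
Qed.

Lemma thmx_gram (w : Om) :
  thmx R w *m (thmx R w)^T = diag_mx (\row_i (row_load w i)%:R).
Proof.
apply/matrixP => i i'; rewrite !mxE; under eq_bigr do rewrite !mxE.
have [<- | neq_ii'] := eqVneq i i'.
  rewrite mulr1n /row_load -sum1_card natr_sum [RHS]big_mkcond /=.
  apply: eq_bigr => j _; rewrite inE eq_sym; case: ((w j).1 == i) => /=.
    by case: (w j).2; rewrite ?mulrNN ?mulr1.
  by rewrite mulr0.
rewrite mulr0n big1 // => j _.
case: eqP => [wi|]; last by rewrite mul0r.
by case: eqP => [wi'|]; [move: neq_ii'; rewrite wi wi' eqxx | rewrite mulr0].
Qed.

Lemma momentE (w : Om) L : moment R w L = N^-1 * \sum_i (row_load w i ^ L)%:R.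
Proof.
rewrite /moment thmx_gram expr_diag_mx mxtrace_diag.
by congr (_ * _); apply: eq_bigr => i _; rewrite !mxE natrX.
Qed.

Lemma mean_moment L : unif_mean (fun w : Om => moment R w L) = load_moment L.
Proof.
under [X in unif_mean X]eq_fun do rewrite momentE.
rewrite unif_meanZ unif_mean_sum.
under eq_bigr do rewrite mean_row_load_exp.
by rewrite sumr_const card_ord -[load_moment L *+ _]mulr_natl mulKf ?pnatr_eq0.
Qed.

Lemma mean_moment_sqr L : unif_mean (fun w : Om => moment R w L ^+ 2)
  <= load_moment L ^+ 2 + load_moment (L + L) / N.
Proof.
set a := load_moment L ^+ 2; set b := load_moment (L + L).
have sqrE (w : Om) : moment R w L ^+ 2 =
    N^-1 ^+ 2 * \sum_i \sum_i' (row_load w i ^ L * row_load w i' ^ L)%:R.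
  rewrite momentE exprMn [X in _ * X]expr2 big_distrlr /=; congr (_ * _).
  by apply: eq_bigr => i _; apply: eq_bigr => i' _; rewrite natrM.
have mean_pair i i' :
    unif_mean (fun w : Om => (row_load w i ^ L * row_load w i' ^ L)%:R)
    <= a + (i == i')%:R * b.
  have [<- | neq_ii'] := eqVneq i i'; last first.
    by rewrite mul0r addr0 mean_row_load_exp_mul.
  under [X in unif_mean X]eq_fun do rewrite -expnD.
  by rewrite mean_row_load_exp mul1r lerDr sqr_ge0.
have sum_pairs : \sum_(i : 'I_n.+1) \sum_(i' : 'I_n.+1) (a + (i == i')%:R * b)
    = N * (N * a + b).
  have row_sum (i : 'I_n.+1) : \sum_i' (a + (i == i')%:R * b) = N * a + b.
    rewrite big_split sumr_const card_ord -[a *+ _]mulr_natl.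
    rewrite (bigD1 i) //= eqxx mul1r.
    by rewrite big1 ?addr0 // => j /negbTE; rewrite eq_sym => ->; rewrite mul0r.
  under eq_bigr do rewrite row_sum.
  by rewrite sumr_const card_ord -[(_ + _) *+ _]mulr_natl.
under [X in unif_mean X]eq_fun do rewrite sqrE.
rewrite unif_meanZ unif_mean_sum; under eq_bigr do rewrite unif_mean_sum.
suff -> : a + b / N = N^-1 ^+ 2 * (N * (N * a + b)).
  rewrite -sum_pairs ler_wpM2l ?exprn_ge0 ?invr_ge0 //.
  by apply: ler_sum => i _; apply: ler_sum => i' _; apply: mean_pair.
by field; rewrite addrC natr1 pnatr_eq0.
Qed.

Lemma unif_prob_moment_dev L (c eps : R) : 0 < eps ->
  unif_prob R (fun w : Om => eps < `|moment R w L - c|)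
  <= ((load_moment L - c) ^+ 2 + load_moment (L + L) / N) / eps ^+ 2.
Proof.
move=> eps_gt0; apply: le_trans (chebyshev_unif _ _ eps_gt0) _.
rewrite ler_pM2r ?invr_gt0 ?exprn_gt0 //.
have sqrB (w : Om) : (moment R w L - c) ^+ 2 =
    moment R w L ^+ 2 + ((- (c *+ 2)) * moment R w L + c ^+ 2).
  by rewrite sqrrB; ring.
have Om_gt0 : (0 < #|{: Om}|)%N by rewrite card_Omega expn_gt0 muln_gt0.
under [X in unif_mean X]eq_fun do rewrite sqrB.
rewrite !unif_meanD unif_meanZ unif_mean_cst // mean_moment.
suff -> : (load_moment L - c) ^+ 2 + load_moment (L + L) / N =
    load_moment L ^+ 2 + load_moment (L + L) / N
    + (- (c *+ 2) * load_moment L + c ^+ 2).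
  by rewrite lerD2r mean_moment_sqr.
by ring.
Qed.

End LoadMoments.

Arguments load_moment {R} n k M.

Local Open Scope classical_set_scope.

Section Asymptotics.
Context {R : realType} {beta : R} {K : nat -> nat}.
Hypothesis K_cvg : (fun n => (K n)%:R / n.+1%:R : R) @ \oo --> beta.

Lemma subn_ratio_cvg i : (fun n => (K n - i)%:R / n.+1%:R : R) @ \oo --> beta.
Proof.
apply: (@squeeze_cvgr _ _ _ _ (fun n => (K n)%:R / n.+1%:R - i%:R * harmonic n)
  (fun n => (K n)%:R / n.+1%:R)); last exact: K_cvg.
- apply: nearW => n /=; rewrite -mulrBl !ler_pM2r ?invr_gt0 ?ltr0n //.
  rewrite ler_nat leq_subr andbT.
  have [le_iK | lt_Ki] := leqP i (K n); first by rewrite natrB.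
  rewrite (_ : (K n - i)%N = 0%N); last by apply/eqP; rewrite subn_eq0 ltnW.
  by rewrite subr_le0 ler_nat ltnW.
- rewrite -[beta]subr0 -(mulr0 (i%:R : R)).
  by apply: cvgB => //; apply: cvgM; [exact: cvg_cst | exact: cvg_harmonic].
Qed.

Lemma ffact_ratio_cvg r :
  (fun n => (K n ^_ r)%:R / n.+1%:R ^+ r : R) @ \oo --> beta ^+ r.
Proof.
have prodE n : (K n ^_ r)%:R / n.+1%:R ^+ r =
    \prod_(i < r) ((K n - i)%:R / n.+1%:R) :> R.
  by rewrite prodf_div prodr_const card_ord ffact_prod natr_prod.
under eq_fun do rewrite prodE.
have -> : beta ^+ r = \prod_(i < r) beta by rewrite prodr_const card_ord.
apply: cvg_big => // [|i _]; first exact: mul_continuous.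
exact: subn_ratio_cvg.
Qed.

Lemma load_moment_cvg M : (0 < M)%N ->
  (fun n => load_moment n (K n) M) @ \oo --> mbar beta M.
Proof.
move=> M_gt0; under eq_fun do rewrite load_moment_stirling.
have -> : mbar beta M = \sum_(r < M.+1) (stirling2 M r)%:R * beta ^+ r.
  rewrite big_ord_recl /mbar big_add1 big_mkord /=.
  by case: M M_gt0 => // M _; rewrite mul0r add0r.
apply: cvg_big => // [|r _]; first exact: add_continuous.
by apply: cvgM; [exact: cvg_cst | exact: ffact_ratio_cvg].
Qed.

Lemma moment_dev_bound_cvg L : (0 < L)%N ->
  (fun n => (load_moment n (K n) L - mbar beta L) ^+ 2
            + load_moment n (K n) (L + L) / n.+1%:R) @ \oo --> (0 : R).
Proof.
move=> L_gt0.
have -> : (0 : R) = 0 ^+ 2 + mbar beta (L + L) * 0 by rewrite mulr0 addr0 expr0n.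
apply: cvgD; last first.
  by apply: cvgM; [exact: load_moment_cvg (ltn_addr _ L_gt0) | exact: cvg_harmonic].
apply: (continuous_cvg _ (@exprn_continuous R 2 0)).
by rewrite -(subrr (mbar beta L)); apply: cvgB; [exact: load_moment_cvg | exact: cvg_cst].
Qed.

End Asymptotics.

Theorem theorem1 (R : realType) (beta : R) (K : nat -> nat) (L : nat) :
  0 < beta ->
  (forall n, (0 < K n)%N) ->
  (forall e : R, 0 < e -> exists n0, forall n, (n0 <= n)%N ->
       `|(K n)%:R / (n.+1)%:R - beta| < e) ->
  (0 < L)%N ->
  forall eps : R, 0 < eps -> forall delta : R, 0 < delta ->
  exists n0, forall n, (n0 <= n)%N ->
    unif_prob R (fun w : Omega n (K n) =>
                   eps < `|moment R w L - mbar beta L|) < delta.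
Proof.
move=> _ _ K_ratio L_gt0 eps eps_gt0 delta delta_gt0.
have K_cvg : (fun n => (K n)%:R / n.+1%:R : R) @ \oo --> beta.
  apply/cvgrPdist_lt => e /K_ratio [n0 K_n0].
  by exists n0 => // n /K_n0; rewrite distrC.
have deps_gt0 : 0 < delta * eps ^+ 2 by rewrite mulr_gt0 ?exprn_gt0.
have [n0 _ bound_small] :=
  cvgr_dist_lt _ _ (moment_dev_bound_cvg K_cvg _ L_gt0) _ deps_gt0.
exists n0 => n /bound_small; rewrite sub0r normrN => bound_lt.
apply: le_lt_trans (unif_prob_moment_dev _ _ _ _ eps_gt0) _.
by rewrite ltr_pdivrMr ?exprn_gt0 // (le_lt_trans (ler_norm _) bound_lt).
Qed.
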